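(* Let $G=(V,E)$ be a graph with node weights $c_v\ge1$, and let $\lambda\in\mathbb R$. Let $x\in\mathbb R^V$ satisfy $x\ge0$, $\sum_{v\in V}c_vx_v=1$, and $\sum_{v\in V}x_v\,q(\sigma)_v\ge\lambda$ for every ordering $\sigma$ of $V$. Then there exists $\theta\in[0,1]$ such that the set $S_\theta=\{v\in V: x_v\ge\theta\}$ is nonempty and has density $\rho(S_\theta)\ge\lambda$.
   Context: For nonempty $S\subseteq V$, $\rho(S)=|E(S)|/\sum_{v\in S}c_v$, where $E(S)$ is the set of edges with both endpoints in $S$. For an ordering $\sigma$ of $V$ and $v\in V$, $q(\sigma)_v=|\{\{u,v\}\in E: u \text{ precedes } v \text{ in }\sigma\}|$. *)

From mathcomp Require Import all_boot all_order all_algebra.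
Set Implicit Arguments. Unset Strict Implicit. Unset Printing Implicit Defensive.
Import Order.TTheory GRing.Theory Num.Theory.
Local Open Scope ring_scope.

Definition simple_graph (V : finType) (e : rel V) : Prop :=
  (forall u v, e u v = e v u) /\ (forall v, ~~ e v v).

Definition edges (V : finType) (e : rel V) : {set {set V}} :=
  [set A : {set V} | [exists u, exists v, e u v && (A == [set u; v])]].

Definition edges_in (V : finType) (e : rel V) (S : {set V}) : {set {set V}} :=
  [set A in edges e | A \subset S].

Definition density (R : realFieldType) (V : finType) (e : rel V) (c : V -> R)
  (S : {set V}) : R :=
  (#|edges_in e S|)%:R / (\sum_(v in S) c v).

(* An ordering sigma of V is a duplicate-free enumeration of V (a sequence that
   is a permutation of enum V); u precedes v iff index u s < index v s. *)
Definition ordering (V : finType) (s : seq V) : Prop := perm_eq s (enum V).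

Definition q (V : finType) (e : rel V) (s : seq V) (v : V) : nat :=
  #|[set u | e u v && (index u s < index v s)%N]|.

From mathcomp Require Import all_boot all_order all_algebra.
From mathcomp Require Import ring lra zify.
Set Implicit Arguments. Unset Strict Implicit. Unset Printing Implicit Defensive.
Import Order.TTheory GRing.Theory Num.Theory.
Local Open Scope ring_scope.

(* Proof idea (a discrete layer-cake argument).  Order the vertices by
   decreasing x, obtaining an ordering s.  Every superlevel set
   S_t = {v | t <= x v} is then an initial segment of s, and counting each edge
   at its later endpoint gives |E(S_t)| = sum_(v in S_t) q(s)_v.  Writing
   a_v = q(s)_v - lambda c_v, the excess F(t) = |E(S_t)| - lambda c(S_t) equals
   sum_(v in S_t) a_v.  A layer-cake estimate shows that if F(x_w) < 0 for every
   w with x_w > 0, then sum_v x_v a_v < 0; but this sum equals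
   sum_v x_v q(s)_v - lambda >= 0 by hypothesis. *)

Section LayerCake.
Variables (R : realDomainType) (V : finType) (a : V -> R).

Lemma sum_shift_by_min (x : V -> R) (A : {set V}) (m : V) :
  m \in A -> (forall j, j \in A -> x m <= x j) ->
  \sum_(v in A) x v * a v =
    x m * \sum_(v in A | x m <= x v) a v + \sum_(v in A :\ m) (x v - x m) * a v.
Proof.
move=> mA mmin.
have -> : \sum_(v in A | x m <= x v) a v = \sum_(v in A) a v.
  by apply: eq_bigl => v; case vA: (v \in A); rewrite ?andbT ?andbF //= mmin.
rewrite (big_setD1 m mA) [\sum_(v in A) a v](big_setD1 m mA) /= mulrDr -addrA.
congr (_ + _); rewrite mulr_sumr -big_split /=.
by apply: eq_bigr => v _; rewrite mulrBl addrC subrK.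
Qed.

(* Induction on #|A|, removing a minimiser of x. *)
Lemma layer_cake_sign (x : V -> R) (A : {set V}) :
  (forall v, v \in A -> 0 <= x v) ->
  (forall w, w \in A -> 0 < x w -> \sum_(v in A | x w <= x v) a v < 0) ->
  \sum_(v in A) x v * a v <= 0 /\
  ((exists2 w, w \in A & 0 < x w) -> \sum_(v in A) x v * a v < 0).
Proof.
move: {2}#|A| (erefl #|A|) => n; elim: n x A => [|n IH] x A card_A x_ge0 levels_neg.
  have -> : A = set0 by apply/eqP; rewrite -cards_eq0 card_A.
  by rewrite big_set0; split => // -[w]; rewrite inE.
have [m0 m0A] : exists m, m \in A by apply/set0Pn; rewrite -cards_eq0 card_A.
have [m mA' mmin'] := @arg_minP _ R _ m0 (mem A) x m0A.
have mA : m \in A by exact: mA'.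
have mmin j : j \in A -> x m <= x j by exact: mmin'.
pose y v := x v - x m.
have card_rest : #|A :\ m| = n by move: card_A; rewrite (cardsD1 m) mA add1n => -[].
have y_ge0 v : v \in A :\ m -> 0 <= y v.
  by rewrite in_setD1 => /andP[_ vA]; rewrite subr_ge0 mmin.
have levels_neg_y w : w \in A :\ m -> 0 < y w -> \sum_(v in A :\ m | y w <= y v) a v < 0.
  rewrite in_setD1 => /andP[_ wA]; rewrite subr_gt0 => lt_mw.
  rewrite (eq_bigl (fun v => (v \in A) && (x w <= x v))).
    exact: levels_neg wA (le_lt_trans (x_ge0 m mA) lt_mw).
  move=> v; rewrite in_setD1 lerD2r.
  by case: (eqVneq v m) => [->|] //=; rewrite mA /= leNgt lt_mw.
have [IH_le IH_lt] := IH y (A :\ m) card_rest y_ge0 levels_neg_y.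
rewrite (sum_shift_by_min mA mmin); have xm_ge0 := x_ge0 m mA.
have head_le0 : x m * \sum_(v in A | x m <= x v) a v <= 0.
  have [xm_le0|xm_gt0] := lerP (x m) 0.
    by rewrite (_ : x m = 0) ?mul0r //; lra.
  by apply: mulr_ge0_le0 => //; apply/ltW/levels_neg.
split; first lra.
move=> [w wA xw]; have [xm_le0|xm_gt0] := lerP (x m) 0; last first.
  suff : x m * \sum_(v in A | x m <= x v) a v < 0 by lra.
  by rewrite pmulr_rlt0 //; exact: levels_neg.
have xm_eq0 : x m = 0 by lra.
rewrite [X in X * _]xm_eq0 mul0r add0r; apply: IH_lt; exists w.
  by rewrite in_setD1 wA andbT; apply: contraTneq xw => ->; rewrite xm_eq0 ltxx.
by rewrite /y xm_eq0 subr0.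
Qed.

Lemma exists_nonneg_level (x : V -> R) :
  (forall v, 0 <= x v) -> (exists w, 0 < x w) -> 0 <= \sum_v x v * a v ->
  exists2 w, 0 < x w & 0 <= \sum_(v in [set u | x w <= x u]) a v.
Proof.
move=> x_ge0 [w0 xw0_gt0] sum_ge0.
have [/existsP[w /andP[]]|] :=
  boolP [exists w, (0 < x w) && (0 <= \sum_(v in [set u | x w <= x u]) a v)].
  by exists w.
rewrite negb_exists => /forallP all_neg.
have levels_neg u : u \in [set: V] -> 0 < x u ->
    \sum_(v in [set: V] | x u <= x v) a v < 0.
  move=> _ xu_gt0; rewrite (eq_bigl (mem [set u' | x u <= x u'])) => [|v].
    by have := all_neg u; rewrite xu_gt0 /= -ltNge.
  by rewrite !inE.
have [_ sum_lt0] := layer_cake_sign (fun v _ => x_ge0 v) levels_neg.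
have := sum_lt0 (ex_intro2 _ _ w0 (in_setT w0) xw0_gt0).
by rewrite (eq_bigl xpredT) => [|v]; [rewrite ltNge sum_ge0 | rewrite inE].
Qed.

End LayerCake.

Section EdgeCounting.
Variables (V : finType) (e : rel V) (s : seq V).
Hypotheses (sg : simple_graph e) (s_ord : ordering s).

Definition before (u v : V) : bool := (index u s < index v s)%N.

Lemma before_total (u v : V) : u != v -> before u v || before v u.
Proof.
move=> neq_uv; have ins w : w \in s by rewrite (perm_mem s_ord) mem_enum.
rewrite /before; case: ltngtP => //= eq_idx.
by move: neq_uv; rewrite -(nth_index u (ins u)) eq_idx nth_index ?eqxx.
Qed.

Lemma before_asym (u v : V) : before u v -> ~~ before v u.
Proof. by rewrite /before; lia. Qed.

Definition earlier_nbrs (S : {set V}) (v : V) : {set V} :=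
  [set u in S | e u v && before u v].

(* Orienting every edge of E(S) towards its later endpoint: E(S) is in
   bijection with the pairs (v, u) of vertices of S with u an earlier
   neighbour of v. *)
Lemma card_edges_in_oriented (S : {set V}) :
  #|edges_in e S| = (\sum_(v in S) #|earlier_nbrs S v|)%N.
Proof.
have [esym eirr] := sg.
pose P := [set p : V * V | (p.1 \in S) && (p.2 \in earlier_nbrs S p.1)].
have -> : (\sum_(v in S) #|earlier_nbrs S v| = #|P|)%N.
  rewrite -sum1_card; under eq_bigr => v _ do rewrite -sum1_card.
  by rewrite pair_big_dep /=; apply: eq_bigl => p; rewrite /P !inE.
have edge_inj : {in P &, injective (fun p : V * V => [set p.2; p.1])}.
  move=> [v u] [v' u']; rewrite !inE /=.
  move=> /and3P[_ _ /andP[_ buv]] /and3P[_ _ /andP[_ bu'v']] eqA.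
  have same_pair z : (z == u) || (z == v) = (z == u') || (z == v').
    by rewrite -!in_set2 eqA.
  have irr z : ~~ before z z by rewrite /before ltnn.
  have hv' : (v' == u) || (v' == v) by rewrite same_pair eqxx orbT.
  have hu : (u == u') || (u == v') by rewrite -same_pair eqxx.
  have hv : (v == u') || (v == v') by rewrite -same_pair eqxx orbT.
  case/orP: hv => /eqP ev; subst v.
    case/orP: hv' => /eqP ev'; subst v'; first by rewrite (negbTE (before_asym buv)) in bu'v'.
    by rewrite (negbTE (irr _)) in bu'v'.
  case/orP: hu => /eqP eu; subst u => //.
  by rewrite (negbTE (irr _)) in buv.
rewrite -(card_in_imset edge_inj); apply: eq_card => A; rewrite !inE.
apply/andP/imsetP => [[/existsP[u /existsP[v /andP[euv /eqP ->]]] sub]|].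
  have uS : u \in S by apply: (subsetP sub); rewrite !inE eqxx.
  have vS : v \in S by apply: (subsetP sub); rewrite !inE eqxx orbT.
  have neq_uv : u != v by apply: contraTneq euv => ->; rewrite (negbTE (eirr v)).
  case/orP: (before_total neq_uv) => b.
  - by exists (v, u); [rewrite !inE /= vS uS euv b |].
  - by exists (u, v); [rewrite !inE /= uS vS esym euv b | rewrite setUC].
move=> [[v u]]; rewrite !inE /= => /and3P[vS uS /andP[euv _]] ->; split.
  by apply/existsP; exists u; apply/existsP; exists v; rewrite euv eqxx.
by apply/subsetP => z; rewrite !inE => /orP[]/eqP->.
Qed.

(* For an initial segment S of s, every earlier neighbour of v in S lies in S,
   so q(s)_v counts exactly the earlier neighbours of v inside S. *)
Lemma card_edges_in_initial (S : {set V}) :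
  (forall u v, v \in S -> before u v -> u \in S) ->
  #|edges_in e S| = (\sum_(v in S) q e s v)%N.
Proof.
move=> initS; rewrite card_edges_in_oriented; apply: eq_bigr => v vS.
apply: eq_card => u; rewrite !inE -/(before u v).
by case: (boolP (before u v)) => b; rewrite ?andbT ?andbF // (initS u v vS b).
Qed.

End EdgeCounting.

Lemma ordering_by_decreasing (R : realDomainType) (V : finType) (x : V -> R) :
  exists2 s : seq V, ordering s &
    forall u v, before s u v -> x v <= x u.
Proof.
pose r u v := x v <= x u.
have rtot : total r by move=> u v; rewrite /r le_total.
have rtr : transitive r by move=> ? ? ? h1 h2; exact: le_trans h2 h1.
have ps : perm_eq (sort r (enum V)) (enum V) by apply/permPl; exact: perm_sort.
exists (sort r (enum V)) => // u v.
by apply: (sorted_ltn_index rtr (sort_sorted rtot _)); rewrite (perm_mem ps) mem_enum.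
Qed.

Section Weights.
Variables (R : realFieldType) (V : finType) (c x : V -> R).
Hypotheses (c_ge1 : forall v, 1 <= c v) (x_ge0 : forall v, 0 <= x v)
  (sum_cx : \sum_(v : V) c v * x v = 1).

Lemma c_gt0 (v : V) : 0 < c v.
Proof. exact: lt_le_trans ltr01 (c_ge1 v). Qed.

Lemma weight_gt0 (S : {set V}) (w : V) : w \in S -> 0 < \sum_(v in S) c v.
Proof.
move=> wS; rewrite (bigD1 w) //=; apply: lt_le_trans (c_gt0 w) _.
by rewrite lerDl sumr_ge0 // => v _; exact/ltW/c_gt0.
Qed.

(* Each x v is at most 1, since c v x v <= sum_w c w x w = 1. *)
Lemma x_le1 (w : V) : x w <= 1.
Proof.
rewrite -sum_cx (bigD1 w) //=.
have : x w <= c w * x w by rewrite ler_peMl.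
have : 0 <= \sum_(i | i != w) c i * x i.
  by apply: sumr_ge0 => v _; apply: mulr_ge0 => //; exact/ltW/c_gt0.
lra.
Qed.

Lemma exists_x_gt0 : exists w, 0 < x w.
Proof.
apply/existsP; apply: contraT; rewrite negb_exists => /forallP x_le0.
suff : \sum_(v : V) c v * x v = 0 by rewrite sum_cx => /eqP; rewrite oner_eq0.
apply: big1 => v _; suff -> : x v = 0 by rewrite mulr0.
by apply/le_anti; rewrite x_ge0 andbT leNgt.
Qed.

End Weights.

Lemma density_ge_of_excess (R : realFieldType) (V : finType) (e : rel V)
    (c : V -> R) (lambda : R) (S : {set V}) :
  0 < \sum_(v in S) c v ->
  0 <= (#|edges_in e S|)%:R - lambda * \sum_(v in S) c v ->
  lambda <= density e c S.
Proof. by move=> cS excess; rewrite /density ler_pdivlMr //; lra. Qed.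

Theorem mainTheorem9 (R : realFieldType) (V : finType) (e : rel V)
  (c : V -> R) (lambda : R) (x : V -> R) :
  simple_graph e ->
  (forall v, 1 <= c v) ->
  (forall v, 0 <= x v) ->
  \sum_(v : V) c v * x v = 1 ->
  (forall s : seq V, ordering s -> lambda <= \sum_(v : V) x v * (q e s v)%:R) ->
  exists theta : R, [/\ 0 <= theta, theta <= 1,
    [set v | theta <= x v] != set0 &
    lambda <= density e c [set v | theta <= x v]].
Proof.
move=> sg c_ge1 x_ge0 sum_cx hq.
have [s s_ord s_decr] := ordering_by_decreasing x.
pose a v := (q e s v)%:R - lambda * c v.
have sum_xa_ge0 : 0 <= \sum_v x v * a v.
  have -> : \sum_v x v * a v =
      \sum_v x v * (q e s v)%:R - lambda * \sum_v c v * x v.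
    by rewrite mulr_sumr -sumrB; apply: eq_bigr => v _; rewrite /a; ring.
  by rewrite sum_cx mulr1 subr_ge0; exact: hq.
have [w xw_gt0 level_ge0] :=
  exists_nonneg_level x_ge0 (exists_x_gt0 x_ge0 sum_cx) sum_xa_ge0.
have wS : w \in [set v | x w <= x v] by rewrite inE.
exists (x w); split.
- exact: x_ge0.
- exact: (x_le1 c_ge1 x_ge0 sum_cx w).
- by apply/set0Pn; exists w.
- apply: density_ge_of_excess (weight_gt0 c_ge1 wS) _.
  rewrite (card_edges_in_initial sg s_ord) => [|u v]; last first.
    by rewrite !inE => xw_le /s_decr; exact: le_trans.
  by rewrite natr_sum mulr_sumr -sumrB.
Qed.
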